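(* Let $\mathcal{I}=\{(i\mid A_i): i\in[m]\}$ be an index coding instance with $|A|_{\min}=\min_i|A_i|$, and let $\boldsymbol{G}\in\{0,1\}^{r\times m}$ be the binary matrix obtained at the end of any execution of the UMCD algorithm on $\mathcal{I}$, with row supports $G_j=\{i: g_{j,i}=1\}$. Then $\boldsymbol{G}$ satisfies the linear code condition with $d=|A|_{\min}+1$, i.e. $\bigl|\bigcup_{j\in K}G_j\bigr|\ge |A|_{\min}+|K|$ for every nonempty $K\subseteq[r]$.
   Context: $B_i=[m]\setminus(A_i\cup\{i\})$. For a $0/1$ matrix $\boldsymbol{G}$, $\boldsymbol{G}_{[k]}^{L}$ is the submatrix of the first $k$ rows and columns $L$; $\mathrm{mcm}(\boldsymbol{G})$ is the maximum number of $1$-entries no two in a common row or column (0 if no columns). UMCD algorithm: $N=[m]$, $k=0$; while $N\ne\emptyset$: $k\leftarrow k+1$; pick $w\in N$ with $|A_w|$ minimal over $N$ (arbitrary tie-breaking); set row $k$ of $\boldsymbol{G}$ to the indicator vector of $\{w\}\cup A_w$; remove $w$ from $N$; remove from $N$ every $i$ with $\mathrm{mcm}(\boldsymbol{G}_{[k]}^{\{i\}\cup B_i})=\mathrm{mcm}(\boldsymbol{G}_{[k]}^{B_i})+1$. The final matrix has $r$ rows, $r$ being the final value of $k$. *)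

From mathcomp Require Import all_boot.
Set Implicit Arguments. Unset Strict Implicit. Unset Printing Implicit Defensive.

Section UMCD.
Variable m : nat.

(* Index coding instance: user i demands x_i and has side information A i. *)
Definition index_coding_instance (A : 'I_m -> {set 'I_m}) : Prop :=
  forall i, i \notin A i.

(* |A|_min = min_i |A_i|  (m is used as a neutral upper bound; |A_i| < m). *)
Definition Amin (A : 'I_m -> {set 'I_m}) : nat := \big[minn/m]_(i : 'I_m) #|A i|.

Definition Bset (A : 'I_m -> {set 'I_m}) (i : 'I_m) : {set 'I_m} :=
  ~: (i |: A i).

(* A 0/1 matrix with m columns is represented by the list of its row supports. *)
Definition is_matching (rows : seq {set 'I_m}) (L : {set 'I_m})
    (M : {set 'I_(size rows) * 'I_m}) : bool :=
  [forall p in M, (p.2 \in L) && (p.2 \in nth set0 rows p.1)] &&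
  [forall p in M, forall q in M, ((p.1 == q.1) || (p.2 == q.2)) ==> (p == q)].

Definition mcm (rows : seq {set 'I_m}) (L : {set 'I_m}) : nat :=
  \max_(M : {set 'I_(size rows) * 'I_m} | is_matching L M) #|M|.

(* Row of G produced when w is picked: indicator of {w} u A_w. *)
Definition G_rows (A : 'I_m -> {set 'I_m}) (ws : seq 'I_m) : seq {set 'I_m} :=
  map (fun w => w |: A w) ws.

(* The set N after k iterations, for the sequence ws of picked users. *)
Fixpoint Nset (A : 'I_m -> {set 'I_m}) (ws : seq 'I_m) (k : nat) : {set 'I_m} :=
  match k with
  | 0 => setT
  | k'.+1 =>
    match drop k' ws with
    | w :: _ =>
        let R := G_rows A (take k ws) in
        (Nset A ws k' :\ w) :\:
          [set i | mcm R (i |: Bset A i) == (mcm R (Bset A i)).+1]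
    | [::] => Nset A ws k'
    end
  end.

Definition umcd_run (A : 'I_m -> {set 'I_m}) (ws : seq 'I_m) : Prop :=
  (forall k w s, drop k ws = w :: s ->
     w \in Nset A ws k /\ (forall v, v \in Nset A ws k -> #|A w| <= #|A v|)) /\
  Nset A ws (size ws) = set0.

End UMCD.

(* Take a counterexample K with |K| minimal and let k be its largest index,
   w the user picked at step k.  Minimality gives a Hall condition: any D of
   columns in the support of K, but outside A_w, meets at least |D| of the
   rows K \ {k}; otherwise deleting the rows meeting D gives a smaller
   counterexample.  All these rows precede row k, and their entries outside
   A_w lie in that support, so an augmenting-path search from column w turns
   a maximum matching on the columns B_w into a larger one on {w} u B_w.  So
   w was already removed from N before it was picked, which is absurd unless
   K = {k}, and the singleton case holds since |{w} u A_w| >= |A|_min + 1. *)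

From mathcomp Require Import all_boot.
From mathcomp Require Import zify.
Set Implicit Arguments. Unset Strict Implicit. Unset Printing Implicit Defensive.

Section Matching.
Variables (m : nat) (rows : seq {set 'I_m}).
Local Notation T := ('I_(size rows) * 'I_m)%type.
Local Notation row j := (nth set0 rows j).

Lemma matchingP (L : {set 'I_m}) (M : {set T}) :
  reflect ((forall p, p \in M -> (p.2 \in L) && (p.2 \in row p.1)) /\
           (forall p q, p \in M -> q \in M -> (p.1 == q.1) || (p.2 == q.2) -> p = q))
          (is_matching L M).
Proof.
apply: (iffP andP) => [[/forall_inP inM /forall_inP injM]|[inM injM]]; split.
- exact: inM.
- by move=> p q pM qM pq; apply/eqP; apply: (implyP (forall_inP (injM p pM) q qM)).
- exact/forall_inP.
- by apply/forall_inP => p pM; apply/forall_inP => q qM; apply/implyP => /injM ->.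
Qed.

Lemma mcm_ge L (M : {set T}) : is_matching L M -> #|M| <= mcm rows L.
Proof. exact: (leq_bigmax_cond (F := fun M : {set T} => #|M|)). Qed.

Lemma mcm_witness L : exists2 M : {set T}, is_matching L M & #|M| = mcm rows L.
Proof.
have : 0 < #|[pred M : {set T} | is_matching L M]|.
  by apply/card_gt0P; exists set0; rewrite inE; apply/matchingP; split=> p; rewrite inE.
case/(eq_bigmax_cond (fun M : {set T} => #|M|)) => M; rewrite inE => LM e.
by exists M; rewrite // /mcm e.
Qed.

Lemma matching_subset (L L' : {set 'I_m}) (M M' : {set T}) :
  L \subset L' -> M' \subset M -> is_matching L M -> is_matching L' M'.
Proof.
move=> /subsetP LL' /subsetP MM' /matchingP [inM injM]; apply/matchingP; split.
  by move=> p /MM' /inM /andP [/LL' -> ->].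
by move=> p q /MM' pM /MM' qM; apply: injM.
Qed.

Lemma matching_setU1 L (M : {set T}) (j : 'I_(size rows)) c :
  is_matching L M -> c \in L -> c \in row j ->
  (forall p, p \in M -> (p.1 != j) && (p.2 != c)) -> is_matching L ((j, c) |: M).
Proof.
move=> /matchingP [inM injM] cL cj free; apply/matchingP; split.
  by move=> p /setU1P [-> | /inM //]; rewrite cL cj.
have sep p : p \in M -> ((j, c).1 == p.1) || ((j, c).2 == p.2) = false.
  by move=> /free /andP [pj pc]; rewrite /= eq_sym (negbTE pj) eq_sym (negbTE pc).
move=> p q /setU1P [-> | pM] /setU1P [-> | qM] //.
- by rewrite sep.
- by rewrite eq_sym [p.2 == _]eq_sym sep.
- exact: injM.
Qed.

Lemma mcm_setU1_le B w : mcm rows (w |: B) <= (mcm rows B).+1.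
Proof.
have [M /matchingP [inM injM] <-] := mcm_witness (w |: B).
pose Mw := [set p in M | p.2 == w].
have MwB : is_matching B (M :\: Mw).
  apply/matchingP; split; last by move=> p q /setDP [pM _] /setDP [qM _]; apply: injM.
  move=> p /setDP [pM]; rewrite inE pM /= => pw.
  have /andP [/setU1P [pw' | ->] ->] // := inM p pM.
  by rewrite pw' eqxx in pw.
have Mw_le1 : #|Mw| <= 1.
  apply/card_le1_eqP => p q; rewrite !inE => /andP [pM /eqP pw] /andP [qM /eqP qw].
  by apply: injM; rewrite // pw qw eqxx orbT.
have := mcm_ge MwB; rewrite -(cardsID Mw M).
have : #|M :&: Mw| <= #|Mw| by apply/subset_leq_card/subsetIr.
lia.
Qed.

Section Augment.
Variables (B C : {set 'I_m}) (w : 'I_m) (S : {set 'I_(size rows)}).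
Hypotheses (wNB : w \notin B) (wC : w \in C) (C_sub : C \subset w |: B).
Hypothesis rowS_sub : forall j c, j \in S -> c \in row j -> c \in w |: B -> c \in C.
Hypothesis hall : forall D : {set 'I_m}, D \subset C ->
  #|D| <= #|[set j in S | [exists c in D, c \in row j]]|.
Local Notation L := (w |: B).

Section Search.
Variable M : {set T}.
Hypothesis M_matching : is_matching B M.

Definition freeable (Y : {set 'I_(size rows)}) (c : 'I_m) :=
  exists2 N : {set T}, is_matching L N &
    [/\ #|N| = #|M|, forall p, p \in N -> p.2 != c &
        forall j x, j \notin Y -> ((j, x) \in N) = ((j, x) \in M)].

Lemma freeable_setU1 Y (j : 'I_(size rows)) c : freeable Y c -> freeable (j |: Y) c.
Proof.
case=> N Nm [Ncard Nc Nagree]; exists N => //; split=> // j' x.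
by rewrite in_setU1 negb_or => /andP [_]; apply: Nagree.
Qed.

Lemma freeable_swap Y (j : 'I_(size rows)) c c' :
  freeable Y c -> c \in C -> c \in row j -> j \notin Y -> (j, c') \in M -> c' != c ->
  freeable (j |: Y) c'.
Proof.
case=> N Nm [Ncard Nc Nagree] cC cj jY jc'M c'c.
have jc'N : (j, c') \in N by rewrite Nagree.
have /matchingP [_ injN] := Nm.
have rowj p : p \in N :\ (j, c') -> (p.1 == j) || (p.2 == c') = false.
  case/setD1P=> pjc' pN; apply/negbTE; apply: contra pjc' => pj.
  by apply/eqP; apply: injN.
exists ((j, c) |: (N :\ (j, c'))); last split.
- apply: matching_setU1; first exact: matching_subset (subsetDl _ _) Nm.
  + exact: subsetP C_sub _ cC.
  + exact: cj.
  + move=> p pN; have /setD1P [_ /Nc ->] := pN.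
    by have := rowj p pN; case: (p.1 == j).
- have jcN : (j, c) \notin N by apply/negP => /Nc; rewrite eqxx.
  by rewrite cardsU1 -Ncard (cardsD1 (j, c') N) jc'N in_setD1 (negbTE jcN) andbF.
- move=> p /setU1P [-> // | pN]; first by rewrite eq_sym.
  by have := rowj p pN; case: (p.2 == c'); rewrite ?orbT.
- move=> j' x; rewrite in_setU1 negb_or => /andP [j'j j'Y].
  by rewrite in_setU1 in_setD1 !xpair_eqE (negbTE j'j) Nagree.
Qed.

(* D and Y are the columns and rows of an alternating tree rooted at column w.
   Hall's condition yields a row of S outside Y meeting D: if M matches it,
   the tree grows by that row and its partner column, otherwise an augmenting
   path ends there.  The fuel n bounds the number of growth steps. *)
Lemma augmenting_search n (D : {set 'I_m}) (Y : {set 'I_(size rows)}) :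
  #|C| - #|D| < n -> D \subset C -> #|Y| < #|D| ->
  (forall j c, (j, c) \in M -> c \in D -> j \in Y) ->
  (forall c, c \in D -> freeable Y c) ->
  exists2 N : {set T}, is_matching L N & #|N| = #|M|.+1.
Proof.
elim: n D Y => // n IH D Y CDn DC YD MY Dfree.
have /subsetPn [j /setIdP [jS /exists_inP [c cD cj]] jY] :
    ~~ ([set j in S | [exists c in D, c \in row j]] \subset Y).
  by apply/negP => /subset_leq_card; have := hall DC; lia.
have cC : c \in C := subsetP DC c cD.
have /matchingP [M_in M_inj] := M_matching.
case: (pickP [pred x | (j, x) \in M]) => [c' /= jc'M | jfree].
- have c'D : c' \notin D by apply: contra jY; apply: MY.
  have c'C : c' \in C.
    by have /andP [c'B c'j] := M_in _ jc'M; apply: rowS_sub jS c'j (setU1r _ c'B).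
  have c'DC : #|c' |: D| <= #|C| by apply/subset_leq_card; rewrite subUset sub1set c'C.
  apply: (IH (c' |: D) (j |: Y)).
  + by move: c'DC; rewrite cardsU1 c'D add1n => /subnSK ->.
  + by rewrite subUset sub1set c'C.
  + by rewrite !cardsU1 c'D jY.
  + move=> j' x j'xM /setU1P [xc' | xD]; last by rewrite in_setU1 (MY _ _ j'xM xD) orbT.
    have [-> _] : (j', x) = (j, c') by apply: M_inj; rewrite //= xc' eqxx orbT.
    exact: setU11.
  + move=> x /setU1P [-> | xD]; last exact/freeable_setU1/Dfree.
    by apply: freeable_swap (Dfree c cD) _ _ _ _ _ => //; apply: contraNneq c'D => ->.
- case: (Dfree c cD) => N Nm [Ncard Nc Nagree].
  have jcN : (j, c) \notin N by apply/negP => /Nc; rewrite eqxx.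
  exists ((j, c) |: N); last by rewrite cardsU1 jcN Ncard.
  apply: matching_setU1 => //; first exact: subsetP C_sub _ cC.
  move=> [j' x] j'xN; rewrite (Nc _ j'xN) andbT; apply: contraTneq j'xN => /= ->.
  by rewrite Nagree //; apply/negbT/jfree.
Qed.
End Search.

Lemma mcm_augment : (mcm rows B).+1 <= mcm rows L.
Proof.
have [M Mm <-] := mcm_witness B.
have /matchingP [M_in _] := Mm.
have [|||j x jxM|x|N Nm <-] := augmenting_search Mm (n := #|C|.+1) (D := [set w]) (Y := set0).
- by rewrite cards1; lia.
- by rewrite sub1set.
- by rewrite cards0 cards1.
- move=> /set1P xw; have /andP [] := M_in _ jxM.
  by rewrite /= xw (negbTE wNB).
- move=> /set1P ->; exists M; last split=> //.
  + exact: matching_subset (subsetUr _ _) (subxx _) Mm.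
  + by move=> p /M_in /andP [pB _]; apply: contraNneq wNB => <-.
- exact: mcm_ge.
Qed.
End Augment.
End Matching.

(* The condition under which UMCD removes user i from N. *)
Definition satisfied m (A : 'I_m -> {set 'I_m}) (rows : seq {set 'I_m}) (i : 'I_m) :=
  mcm rows (i |: Bset A i) == (mcm rows (Bset A i)).+1.

Lemma umcd_pick_unsatisfied m (A : 'I_m -> {set 'I_m}) ws k w s :
  umcd_run A ws -> 0 < k -> drop k ws = w :: s ->
  ~~ satisfied A (G_rows A (take k ws)) w.
Proof.
case: k => // k [run _] _ wk; have [/= + _] := run _ _ _ wk.
have k_lt : k < size ws.
  by rewrite ltnNge; apply/negP => /leqW /drop_oversize; rewrite wk.
by rewrite (drop_nth w k_lt) !inE => /andP [].
Qed.

Lemma Amin_le m (A : 'I_m -> {set 'I_m}) i : Amin A <= #|A i|.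
Proof.
rewrite /Amin; elim: (index_enum _) (mem_index_enum i) => // a s IH.
rewrite in_cons big_cons => /predU1P [<- | /IH]; first exact: geq_minl.
exact: leq_trans (geq_minr _ _).
Qed.

Section LinearCodeCondition.
Variables (m : nat) (A : 'I_m -> {set 'I_m}) (ws : seq 'I_m).
Hypothesis A_irrefl : index_coding_instance A.
Hypothesis picks_unsatisfied : forall k w s, 0 < k -> drop k ws = w :: s ->
  ~~ satisfied A (G_rows A (take k ws)) w.

Local Notation G := (G_rows A ws).
Local Notation user k := (tnth (in_tuple ws) k).

Definition rows_support (K : {set 'I_(size ws)}) := \bigcup_(j in K) nth set0 G j.

Lemma nth_G_rows (k : 'I_(size ws)) : nth set0 G k = user k |: A (user k).
Proof. by rewrite /G_rows (nth_map (user k)) // [in RHS](tnth_nth (user k)). Qed.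

Lemma row_in_rows_support (K : {set 'I_(size ws)}) (k : 'I_(size ws)) :
  k \in K -> user k |: A (user k) \subset rows_support K.
Proof. by move=> kK; rewrite -nth_G_rows; apply: (bigcup_sup k). Qed.

Lemma user_unsatisfied (k : 'I_(size ws)) :
  0 < k -> ~~ satisfied A (G_rows A (take k ws)) (user k).
Proof.
move/picks_unsatisfied; apply.
by rewrite (drop_nth (user k)) // [in RHS](tnth_nth (user k)).
Qed.

Section MinimalCounterexample.
Variables (K : {set 'I_(size ws)}) (k : 'I_(size ws)).
Hypothesis IH : forall K' : {set 'I_(size ws)}, K' != set0 -> #|K'| < #|K| ->
  Amin A + #|K'| <= #|rows_support K'|.
Hypothesis kK : k \in K.
Hypothesis K_small : #|rows_support K| < Amin A + #|K|.

Lemma hall_rows_support (D : {set 'I_m}) : D \subset rows_support K :\: A (user k) ->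
  #|D| <= #|[set i in K :\ k | [exists c in D, c \in nth set0 G i]]|.
Proof.
set X := [set i in K :\ k | _] => DC; rewrite leqNgt; apply/negP => XD.
pose K2 := (K :\ k) :\: X.
have XK : X \subset K :\ k by apply/subsetP => i; rewrite inE => /andP [].
have cardK : #|K2| + #|X| + 1 = #|K|.
  by rewrite cardsDS // subnK ?subset_leq_card // (cardsD1 k K) kK addn1.
have AK : A (user k) \subset rows_support K.
  exact: subset_trans (subsetUr _ _) (row_in_rows_support kK).
have cardD : #|D| + #|A (user k)| <= #|rows_support K|.
  by rewrite addnC -leq_subRL ?subset_leq_card // -cardsDS //; apply: subset_leq_card.
have := Amin_le A (user k) => Amin_k.
have K2_ne0 : K2 != set0 by rewrite -card_gt0; lia.
have K2_sub : rows_support K2 \subset rows_support K :\: D.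
  apply/subsetP => c /bigcupP [i /setDP [iK iX] ci]; rewrite inE.
  have /setD1P [_ iK0] := iK.
  rewrite (subsetP (bigcup_sup i iK0)) // andbT; apply: contra iX => cD.
  by rewrite inE iK; apply/exists_inP; exists c.
have := IH K2_ne0 (ltac:(lia)).
have := subset_leq_card K2_sub; rewrite cardsDS; last first.
  exact: subset_trans DC (subsetDl _ _).
lia.
Qed.

Hypothesis k_max : forall i, i \in K -> i <= k.

Lemma lt_max i : i \in K :\ k -> i < k.
Proof.
case/setD1P=> ik iK; rewrite ltn_neqAle k_max // andbT.
by apply: contra ik => /eqP/val_inj ->.
Qed.

Lemma minimal_counterexample_singleton : K :\ k = set0.
Proof.
have [//|/set0Pn [i /lt_max ik]] := eqVneq (K :\ k) set0; exfalso.
have k_gt0 : 0 < k := leq_ltn_trans (leq0n i) ik.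
apply: (negP (user_unsatisfied k_gt0)).
set w := user k; set R := G_rows A (take k ws).
have szR : size R = k by rewrite size_map size_takel // ltnW.
have szR_le : size R <= size ws by rewrite szR ltnW.
have nth_R (j : 'I_(size R)) : nth set0 R j = nth set0 G (widen_ord szR_le j).
  by case: j => j /=; rewrite {1}szR => jk; rewrite /R /G_rows map_take nth_take.
rewrite /satisfied eqn_leq mcm_setU1_le /=.
apply: (mcm_augment (C := rows_support K :\: A w)
                    (S := [set j | widen_ord szR_le j \in K :\ k])).
- by rewrite /Bset in_setC setU11.
- by rewrite inE A_irrefl (subsetP (row_in_rows_support kK)) // setU11.
- apply/subsetP => c; rewrite inE /Bset in_setU1 in_setC in_setU1 => /andP [cA _].
  by rewrite (negbTE cA) orbF orbN.
- move=> j c; rewrite inE nth_R => /setD1P [_ jK] cj.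
  rewrite /Bset in_setU1 in_setC in_setU1 negb_or inE (subsetP (bigcup_sup _ jK) _ cj) andbT.
  by case/orP=> [/eqP -> | /andP [_ //]]; apply: A_irrefl.
- move=> D DC; apply: leq_trans (hall_rows_support DC) _.
  apply: leq_trans (leq_imset_card (widen_ord szR_le) _); apply/subset_leq_card/subsetP => i'.
  rewrite inE => /andP [i'K /exists_inP [c cD ci']].
  have i'_lt : i' < size R by rewrite szR lt_max.
  have wi' : widen_ord szR_le (Ordinal i'_lt) = i' by apply: val_inj.
  apply/imsetP; exists (Ordinal i'_lt) => //.
  rewrite inE nth_R wi' [_ \in [set _ | _]]inE wi' i'K.
  by apply/exists_inP; exists c.
Qed.

End MinimalCounterexample.

Lemma rows_support_ge K : K != set0 -> Amin A + #|K| <= #|rows_support K|.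
Proof.
have [n] := ubnP #|K|; elim: n K => // n IH K Kn K0.
have /set0Pn [k0 k0K] := K0.
case: (arg_maxnP (fun i : 'I_(size ws) => val i) k0K) => k kK0 k_max.
have {kK0} kK : k \in K := kK0.
rewrite leqNgt; apply/negP => K_small.
have IH' K' : K' != set0 -> #|K'| < #|K| -> Amin A + #|K'| <= #|rows_support K'|.
  by move=> K'0 K'K; apply: IH K'0; apply: leq_trans K'K (ltnSE Kn).
have Kk := minimal_counterexample_singleton IH' kK K_small k_max.
move: K_small; rewrite (cardsD1 k K) kK Kk cards0 addn1 ltnNge => /negP; apply.
apply: leq_trans (subset_leq_card (row_in_rows_support kK)).
by rewrite cardsU1 A_irrefl ltnS Amin_le.
Qed.

End LinearCodeCondition.

Theorem lemma3 (m : nat) (A : 'I_m -> {set 'I_m}) (ws : seq 'I_m) :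
  index_coding_instance A ->
  umcd_run A ws ->
  forall K : {set 'I_(size ws)}, K != set0 ->
    Amin A + #|K| <= #|\bigcup_(j in K) nth set0 (G_rows A ws) j|.
Proof.
move=> A_irrefl run K K0.
apply: rows_support_ge K0 => // k w s k_gt0; exact: umcd_pick_unsatisfied.
Qed.
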